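(* Let $X:=\{x_i\}_{i\in[n]}$ be points in $\mathbb{R}^d$, identified with the $d\times n$ matrix with columns $x_i$, let $k\ge1$, and let $P\in\mathbb{R}^{d\times d}$ be any orthogonal projection matrix. Then \[\min_{Z\in\mathcal{Z}(n,k)}\frac12\operatorname{tr}(D_XZ)\ge \|PX\|_F^2-k\|PX\|_{2\to2}^2.\]
   Context: $D_X\in\mathbb{R}^{n\times n}$ has entries $(D_X)_{ij}=\|x_i-x_j\|^2$. $\mathcal{Z}(n,k):=\{Z\in\mathbb{R}^{n\times n}: Z\mathbf 1=\mathbf 1,\ \operatorname{tr}Z=k,\ Z\ge0\text{ entrywise},\ Z\succeq0\}$. *)

From HB Require Import structures.
From mathcomp Require Import all_boot all_order all_algebra.
From mathcomp Require Import classical_sets reals.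
Set Implicit Arguments. Unset Strict Implicit. Unset Printing Implicit Defensive.
Import Order.TTheory GRing.Theory Num.Theory.
Local Open Scope ring_scope.
Local Open Scope classical_set_scope.

Section Defs.
Variable R : realType.

Definition distsq_mx (d n : nat) (X : 'M[R]_(d, n)) : 'M[R]_n :=
  \matrix_(i < n, j < n) \sum_(l < d) (X l i - X l j) ^+ 2.

Definition frob2 (m n : nat) (M : 'M[R]_(m, n)) : R :=
  \sum_(i < m) \sum_(j < n) M i j ^+ 2.

Definition vnorm (n : nat) (v : 'cV[R]_n) : R := Num.sqrt (\sum_(i < n) v i 0 ^+ 2).

Definition opnorm (m n : nat) (M : 'M[R]_(m, n)) : R :=
  sup [set vnorm (M *m v) | v in [set v : 'cV[R]_n | vnorm v <= 1]].

Definition psd (n : nat) (Z : 'M[R]_n) : Prop :=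
  Z^T = Z /\ forall v : 'cV[R]_n, 0 <= (v^T *m Z *m v) 0 0.

Definition orth_proj (d : nat) (P : 'M[R]_d) : Prop := P^T = P /\ P *m P = P.

Definition Zset (n : nat) (k : R) : set 'M[R]_n :=
  [set Z | Z *m (const_mx 1 : 'cV[R]_n) = const_mx 1 /\ \tr Z = k /\
           (forall i j, 0 <= Z i j) /\ psd Z].
End Defs.

(* Write A = P X and G = A^T A.  An orthogonal projection shortens every
   difference of columns and Z is entrywise nonnegative, so
   tr (D_X Z) >= tr (D_A Z).  Expanding |a_i - a_j|^2 = G_ii + G_jj - 2 G_ij
   and using that Z is symmetric with unit row sums gives
   tr (D_A Z) = 2 |A|_F^2 - 2 tr (Z G).  Finally |A|_2^2 I - G is positive
   semidefinite, and the trace of a product of two PSD matrices is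
   nonnegative, so tr (Z G) <= |A|_2^2 tr Z = k |A|_2^2.  That last fact is proved
   by peeling off rank-one terms Z = S + (Z_mm)^-1 z_m z_m^T, where the Schur
   complement S is again PSD and has one more zero row. *)

From HB Require Import structures.
From mathcomp Require Import all_boot all_order all_algebra.
From mathcomp Require Import classical_sets reals.
From mathcomp Require Import ring lra.

Set Implicit Arguments.
Unset Strict Implicit.
Unset Printing Implicit Defensive.
Import Order.TTheory GRing.Theory Num.Theory.
Local Open Scope ring_scope.

Lemma affine_ge0_slope_eq0 (R : realFieldType) (a b : R) :
  (forall t, 0 <= a + b * t) -> b = 0.
Proof.
move=> ge0; apply/eqP/negPn/negP => b_neq0.
have := ge0 (- (a + 1) / b); rewrite mulrCA divff // mulr1; lra.
Qed.

Section PositiveSemidefinite.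
Variables (R : realType) (n : nat).
Implicit Types (Z N : 'M[R]_n) (v : 'cV[R]_n).

Definition qform Z v : R := (v^T *m Z *m v) 0 0.

Lemma psd_sym Z : psd Z -> Z^T = Z.
Proof. by case. Qed.

Lemma psd_qform_ge0 Z : psd Z -> forall v, 0 <= qform Z v.
Proof. by case. Qed.

Lemma qform_add_delta Z v (m : 'I_n) (t : R) : Z^T = Z ->
  qform Z (v + t *: delta_mx m 0) =
  qform Z v + 2 * t * (row m Z *m v) 0 0 + t ^+ 2 * Z m m.
Proof.
move=> sZ; rewrite /qform [(_ + _)^T]linearD /= [(_ *: _)^T]linearZ /= trmx_delta.
rewrite !mulmxDl !mulmxDr -!scalemxAl -!scalemxAr -!rowE.
rewrite -[v^T *m Z *m _]mulmxA -colE.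
have -> : col m (v^T *m Z) = (row m Z *m v)^T.
  by rewrite -[LHS]trmxK tr_col trmx_mul trmxK sZ row_mul.
by rewrite -colE !mxE; ring.
Qed.

Lemma psd_diag_ge0 Z (m : 'I_n) : psd Z -> 0 <= Z m m.
Proof.
move=> psdZ; have := psd_qform_ge0 psdZ (0 + 1 *: delta_mx m 0).
by rewrite qform_add_delta ?psd_sym // /qform !mulmx0 !mxE expr1n; lra.
Qed.

Lemma psd_cauchy_schwarz Z (m : 'I_n) v : psd Z ->
  (row m Z *m v) 0 0 ^+ 2 <= Z m m * qform Z v.
Proof.
move=> psdZ; set s := (row m Z *m v) 0 0; set q := qform Z v.
have expand t : 0 <= q + 2 * t * s + t ^+ 2 * Z m m.
  by rewrite -qform_add_delta ?psd_sym //; apply: psd_qform_ge0.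
have [Z0 | Z_neq0] := eqVneq (Z m m) 0.
  suff -> : s = 0 by rewrite Z0 expr0n mul0r.
  have /(affine_ge0_slope_eq0 (a := q)) : forall t, 0 <= q + 2 * s * t.
    by move=> t; have := expand t; rewrite Z0 mulr0 addr0 mulrAC.
  by move/eqP; rewrite mulf_eq0 pnatr_eq0 => /eqP.
have Z_gt0 : 0 < Z m m by rewrite lt_def Z_neq0 psd_diag_ge0.
have := expand (- s / Z m m).
have -> : q + 2 * (- s / Z m m) * s + (- s / Z m m) ^+ 2 * Z m m =
          q - s ^+ 2 / Z m m.
  by field; rewrite gt_eqF.
by rewrite subr_ge0 ler_pdivrMr // mulrC.
Qed.

Lemma psd_pivot_row_eq0 Z (m j : 'I_n) : psd Z -> Z m m = 0 -> Z m j = 0.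
Proof.
move=> psdZ Z0; have := psd_cauchy_schwarz m (delta_mx j 0) psdZ.
rewrite Z0 mul0r -colE !mxE => sq_le0.
by apply/eqP; rewrite -sqrf_eq0 eq_le sq_le0 sqr_ge0.
Qed.

(* When Z m m = 0 the inverse is 0, and so is column m of a PSD Z. *)
Definition schur_mx Z (m : 'I_n) : 'M[R]_n :=
  Z - (Z m m)^-1 *: (col m Z *m row m Z).

Lemma schur_mxE Z (m i j : 'I_n) :
  schur_mx Z m i j = Z i j - (Z m m)^-1 * (Z i m * Z m j).
Proof. by rewrite !mxE big_ord1 !mxE. Qed.

Lemma qform_schur_mx Z (m : 'I_n) v : Z^T = Z ->
  qform (schur_mx Z m) v = qform Z v - (Z m m)^-1 * (row m Z *m v) 0 0 ^+ 2.
Proof.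
move=> sZ; have col_row : v^T *m col m Z = (row m Z *m v)^T.
  by rewrite trmx_mul tr_row sZ.
rewrite /qform /schur_mx mulmxBr mulmxBl -scalemxAr -scalemxAl !mulmxA col_row.
rewrite -[_ *m row m Z *m v]mulmxA; move: (row m Z *m v) => s.
by rewrite !mxE big_ord1 !mxE expr2.
Qed.

Lemma psd_schur_mx Z (m : 'I_n) : psd Z -> psd (schur_mx Z m).
Proof.
move=> psdZ; have sZ := psd_sym psdZ; split.
  by rewrite linearB /= linearZ /= trmx_mul tr_row tr_col sZ.
move=> v; rewrite [X in 0 <= X]qform_schur_mx // subr_ge0.
have [Z0 | Z_neq0] := eqVneq (Z m m) 0.
  by rewrite Z0 invr0 mul0r psd_qform_ge0.
have Z_gt0 : 0 < Z m m by rewrite lt_def Z_neq0 psd_diag_ge0.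
by rewrite ler_pdivrMl // psd_cauchy_schwarz.
Qed.

Lemma schur_mx_pivot_row Z (m j : 'I_n) : psd Z -> schur_mx Z m m j = 0.
Proof.
move=> psdZ; rewrite schur_mxE.
have [Z0 | Z_neq0] := eqVneq (Z m m) 0.
  by rewrite (psd_pivot_row_eq0 j psdZ Z0) !mulr0 subr0.
by rewrite mulrA mulVf // mul1r subrr.
Qed.

Lemma mxtrace_schur_mx Z N (m : 'I_n) : Z^T = Z ->
  \tr (Z *m N) = \tr (schur_mx Z m *m N) + (Z m m)^-1 * qform N (col m Z).
Proof.
move=> sZ; rewrite /schur_mx mulmxBl linearB /= -scalemxAl linearZ /= -mulmxA.
rewrite [\tr (col m Z *m _)]mxtrace_mulC trace_mx11 /qform tr_col sZ; ring.
Qed.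

Lemma mxtrace_mul_psd_ge0 Z N : psd Z -> psd N -> 0 <= \tr (Z *m N).
Proof.
move=> psdZ psdN.
suff rows_in_ge0 (S : {set 'I_n}) Z' : psd Z' ->
    (forall i j, i \notin S -> Z' i j = 0) -> 0 <= \tr (Z' *m N).
  by apply: (rows_in_ge0 [set: 'I_n]%SET) => // i j; rewrite finset.in_setT.
elim: {S}#|S| {-2}S (erefl #|S|) Z' => [|s IH] S cardS Z' psdZ' Z'0.
  have -> : Z' = 0.
    by apply/matrixP => i j; rewrite mxE Z'0 // (cards0_eq cardS) inE.
  by rewrite mul0mx mxtrace0.
have [S0 | [m Sm]] := set_0Vmem S; first by rewrite S0 cards0 in cardS.
rewrite (mxtrace_schur_mx N m (psd_sym psdZ')) addr_ge0 //.
  apply: (IH (S :\ m)) => [|| i j].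
  - by move: cardS; rewrite (cardsD1 m) Sm add1n => -[].
  - exact: psd_schur_mx.
  - rewrite in_setD1 negb_and negbK => /orP [/eqP -> | iS].
      exact: schur_mx_pivot_row.
    by rewrite schur_mxE !(Z'0 i) // mul0r mulr0 subr0.
by rewrite mulr_ge0 ?invr_ge0 ?psd_diag_ge0 ?psd_qform_ge0.
Qed.

End PositiveSemidefinite.

Section OperatorNorm.
Variable R : realType.

Lemma vnorm_ge0 n (u : 'cV[R]_n) : 0 <= vnorm u.
Proof. exact: sqrtr_ge0. Qed.

Lemma sumr_sqr_ge0 n (u : 'cV[R]_n) : 0 <= \sum_i u i 0 ^+ 2.
Proof. by apply: sumr_ge0 => i _; apply: sqr_ge0. Qed.

Lemma vnorm_sqr n (u : 'cV[R]_n) : vnorm u ^+ 2 = (u^T *m u) 0 0.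
Proof.
rewrite sqr_sqrtr ?sumr_sqr_ge0 // mxE.
by apply: eq_bigr => i _; rewrite mxE expr2.
Qed.

Lemma vnormZ n (a : R) (u : 'cV[R]_n) : vnorm (a *: u) = `|a| * vnorm u.
Proof.
rewrite /vnorm -sqrtr_sqr -sqrtrM ?sqr_ge0 // mulr_sumr.
by congr Num.sqrt; apply: eq_bigr => i _; rewrite mxE exprMn.
Qed.

Lemma vnorm_eq0 n (u : 'cV[R]_n) : vnorm u = 0 -> u = 0.
Proof.
move=> u0; have : \sum_i u i 0 ^+ 2 = 0.
  by rewrite -(sqr_sqrtr (sumr_sqr_ge0 u)) -/(vnorm u) u0 expr0n.
move/psumr_eq0P => /(_ (fun i _ => sqr_ge0 _)) ui0.
apply/matrixP => i j; rewrite ord1 mxE; apply/eqP; rewrite -sqrf_eq0; apply/eqP.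
exact: ui0.
Qed.

Lemma normr_le_vnorm n (u : 'cV[R]_n) i : `|u i 0| <= vnorm u.
Proof.
rewrite -sqrtr_sqr ler_sqrt ?sumr_sqr_ge0 // (bigD1 i) //= lerDl.
by apply: sumr_ge0 => j _; apply: sqr_ge0.
Qed.

Lemma opnorm_has_ubound m n (A : 'M[R]_(m, n)) :
  has_ubound [set vnorm (A *m v) | v in [set v : 'cV[R]_n | vnorm v <= 1]].
Proof.
exists (Num.sqrt (\sum_i (\sum_j `|A i j|) ^+ 2)) => _ [v /= v_le1 <-].
rewrite ler_sqrt ?sumr_ge0 // => [|i _]; last exact: sqr_ge0.
apply: ler_sum => i _; rewrite -real_normK ?num_real // lerXn2r ?nnegrE //.
  by apply: sumr_ge0.
rewrite mxE (le_trans (ler_norm_sum _ _ _)) //; apply: ler_sum => j _.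
by rewrite normrM ler_piMr // (le_trans (normr_le_vnorm _ _)).
Qed.

Lemma opnorm_bound m n (A : 'M[R]_(m, n)) (v : 'cV[R]_n) :
  vnorm (A *m v) <= opnorm A * vnorm v.
Proof.
have [/vnorm_eq0 -> | v_neq0] := eqVneq (vnorm v) 0.
  by rewrite mulmx0 /vnorm !big1 ?sqrtr0 ?mulr0 // => i _; rewrite mxE expr0n.
have v_gt0 : 0 < vnorm v by rewrite lt_def v_neq0 vnorm_ge0.
have unit_le1 : vnorm ((vnorm v)^-1 *: v) <= 1.
  by rewrite vnormZ ger0_norm ?invr_ge0 ?vnorm_ge0 // mulVf.
have := ub_le_sup (opnorm_has_ubound A)
  (ex_intro2 _ _ ((vnorm v)^-1 *: v) unit_le1 erefl).
rewrite -/(opnorm A) -scalemxAr vnormZ ger0_norm ?invr_ge0 ?vnorm_ge0 //.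
by rewrite ler_pdivrMl // mulrC.
Qed.

Lemma psd_opnorm_gram m n (A : 'M[R]_(m, n)) :
  psd ((opnorm A ^+ 2)%:M - A^T *m A).
Proof.
split; first by rewrite linearB /= tr_scalar_mx trmx_mul trmxK.
move=> v; rewrite mulmxBr mulmxBl scalar_mxC mul_scalar_mx -scalemxAl.
rewrite -[v^T *m (A^T *m A) *m v]mulmxA -mulmxA mulmxA -trmx_mul.
rewrite 2!mxE [X in _ + X]mxE -!vnorm_sqr subr_ge0 -exprMn.
rewrite lerXn2r ?nnegrE ?vnorm_ge0 ?opnorm_bound //.
exact: le_trans (vnorm_ge0 _) (opnorm_bound A v).
Qed.

Lemma mxtrace_gram_le m n (A : 'M[R]_(m, n)) (Z : 'M[R]_n) :
  psd Z -> \tr (Z *m (A^T *m A)) <= opnorm A ^+ 2 * \tr Z.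
Proof.
move=> psdZ; have := mxtrace_mul_psd_ge0 psdZ (psd_opnorm_gram A).
by rewrite mulmxBr scalar_mxC mul_scalar_mx linearB linearZ /= subr_ge0.
Qed.

End OperatorNorm.

Section SquaredDistances.
Variable R : realType.

Lemma frob2_ge0 m n (M : 'M[R]_(m, n)) : 0 <= frob2 M.
Proof. by apply: sumr_ge0 => i _; apply: sumr_ge0 => j _; apply: sqr_ge0. Qed.

Lemma frob2_mxtrace m n (M : 'M[R]_(m, n)) : frob2 M = \tr (M^T *m M).
Proof.
rewrite /frob2 /mxtrace exchange_big; apply: eq_bigr => j _.
by rewrite mxE; apply: eq_bigr => i _; rewrite mxE expr2.
Qed.

Lemma frob2_orth_proj_le d n (P : 'M[R]_d) (M : 'M[R]_(d, n)) :
  orth_proj P -> frob2 (P *m M) <= frob2 M.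
Proof.
move=> [sP iP]; have PM_gram : (P *m M)^T *m (P *m M) = M^T *m (P *m M).
  by rewrite trmx_mul sP -mulmxA (mulmxA P) iP.
have pythagoras : frob2 M = frob2 (P *m M) + frob2 (M - P *m M).
  rewrite !frob2_mxtrace -linearD /= [(M - _)^T]linearB /= mulmxBl !mulmxBr.
  rewrite PM_gram trmx_mul sP -mulmxA.
  by rewrite subrr subr0 addrC subrK.
by rewrite pythagoras lerDl frob2_ge0.
Qed.

Lemma distsq_mxE d n (X : 'M[R]_(d, n)) i j :
  distsq_mx X i j = frob2 (col i X - col j X).
Proof. by rewrite mxE; apply: eq_bigr => l _; rewrite big_ord1 !mxE. Qed.

Lemma distsq_mx_orth_proj_le d n (P : 'M[R]_d) (X : 'M[R]_(d, n)) i j :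
  orth_proj P -> distsq_mx (P *m X) i j <= distsq_mx X i j.
Proof.
by move=> projP; rewrite !distsq_mxE !colE -!mulmxA -mulmxBr frob2_orth_proj_le.
Qed.

Lemma mxtrace_distsq_mx_orth_proj_le d n (P : 'M[R]_d) (X : 'M[R]_(d, n))
    (Z : 'M[R]_n) :
  orth_proj P -> (forall i j, 0 <= Z i j) ->
  \tr (distsq_mx (P *m X) *m Z) <= \tr (distsq_mx X *m Z).
Proof.
move=> projP Z_ge0; apply: ler_sum => i _; rewrite !mxE; apply: ler_sum => j _.
by rewrite ler_wpM2r ?distsq_mx_orth_proj_le.
Qed.

Lemma distsq_mx_gram d n (A : 'M[R]_(d, n)) i j :
  distsq_mx A i j = (A^T *m A) i i + (A^T *m A) j j - 2 * (A^T *m A) i j.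
Proof.
rewrite !mxE mulr_sumr -!big_split -sumrB /=; apply: eq_bigr => l _.
by rewrite !mxE; ring.
Qed.

Lemma mxtrace_distsq_mx d n (A : 'M[R]_(d, n)) (Z : 'M[R]_n) :
  Z^T = Z -> Z *m (const_mx 1 : 'cV_n) = const_mx 1 ->
  \tr (distsq_mx A *m Z) = 2 * (frob2 A - \tr (Z *m (A^T *m A))).
Proof.
move=> sZ Z1; set G := A^T *m A.
have row_sum i : \sum_j Z i j = 1.
  have := congr1 (fun M : 'cV_n => M i 0) Z1; rewrite !mxE => <-.
  by apply: eq_bigr => j _; rewrite mxE mulr1.
have col_sum i : \sum_j Z j i = 1.
  by rewrite -(row_sum i); apply: eq_bigr => j _; rewrite -[in RHS]sZ mxE.
have -> : \tr (distsq_mx A *m Z) = \sum_i \sum_j G i i * Z j i +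
    \sum_i \sum_j G j j * Z j i - 2 * \tr (G *m Z).
  rewrite /mxtrace mulr_sumr -!big_split -sumrB /=; apply: eq_bigr => i _.
  rewrite [LHS]mxE [(G *m Z) i i]mxE mulr_sumr -!big_split -sumrB /=.
  by apply: eq_bigr => j _; rewrite distsq_mx_gram -/G; ring.
have -> : \sum_i \sum_j G i i * Z j i = \tr G.
  by apply: eq_bigr => i _; rewrite -mulr_sumr col_sum mulr1.
have -> : \sum_i \sum_j G j j * Z j i = \tr G.
  rewrite exchange_big; apply: eq_bigr => j _.
  by rewrite -mulr_sumr row_sum mulr1.
by rewrite frob2_mxtrace -/G [\tr (Z *m G)]mxtrace_mulC; ring.
Qed.

End SquaredDistances.

Theorem lemma18 (R : realType) (d n k : nat) (X : 'M[R]_(d, n)) (P : 'M[R]_d) :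
  (1 <= k)%N -> orth_proj P ->
  forall Z : 'M[R]_n, @Zset R n k%:R Z ->
    2^-1 * \tr (distsq_mx X *m Z) >= frob2 (P *m X) - k%:R * opnorm (P *m X) ^+ 2.
Proof.
(* The bound holds for every k. *)
move=> _ projP Z [Z1 [trZ [Z_ge0 psdZ]]].
have := mxtrace_distsq_mx_orth_proj_le X projP Z_ge0.
rewrite mxtrace_distsq_mx ?(psd_sym psdZ) //.
have := mxtrace_gram_le (P *m X) psdZ; rewrite trZ.
lra.
Qed.
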